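(* Let $m\ge1$ and work in $\Lambda^{\pm}_m=\mathbb Z[x_1^{\pm1},\dots,x_m^{\pm1}]^{S_m}$. Then: (1) for every $k\in\mathbb Z$, $H_k=h_k-h_k^{(\infty)}$; equivalently $H_k=h_k$ for $k\ge0$, $H_k=0$ for $-m<k<0$, and $H_k=-h^{(\infty)}_k$ for $k\le -m$; (2) for every $k\in\mathbb Z$, $H_k(x_1,\dots,x_m)-x_1H_{k-1}(x_1,\dots,x_m)=H_k(x_2,\dots,x_m)$, where the right-hand side is the corresponding element defined for the $m-1$ variables $x_2,\dots,x_m$; (3) if $m=1$, then $H_k(x_1)-x_1H_{k-1}(x_1)=0$ for every $k\in\mathbb Z$.
   Context: For a sequence of integers $\lambda=(\lambda_1,\dots,\lambda_m)$ define $E_\lambda$ by $E_\lambda(x)\prod_{i<j}(x_i-x_j)=\sum_{\sigma\in S_m}\mathrm{sgn}(\sigma)\sigma(x_1^{\lambda_1+m-1}x_2^{\lambda_2+m-2}\cdots x_m^{\lambda_m})$, and set $H_k=E_{(k,0,\dots,0)}$ for $k\in\mathbb Z$. Define $h_k$ and $h_k^{(\infty)}$ by the expansions of $1/\prod_{i=1}^m(1-x_it)$ at $t=0$ and $t=\infty$: $\frac{1}{\prod_i(1-x_it)}=\sum_{k\ge0}h_kt^k=\sum_{k\le -m}h^{(\infty)}_kt^k$, with $h_k=0$ for $k<0$ and $h_k^{(\infty)}=0$ for $k>-m$. *)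

From HB Require Import structures.
From mathcomp Require Import all_boot all_order all_algebra all_fingroup.
From mathcomp Require Import mpoly.
Set Implicit Arguments. Unset Strict Implicit. Unset Printing Implicit Defensive.
Import Order.TTheory GRing.Theory Num.Theory.
Local Open Scope ring_scope.

(* All objects live in a field K, with variables x : 'I_m -> K.
   The main theorem instantiates K with the fraction field of Z[x_1..x_m]
   (into which Z[x^{+-1}]^{S_m} embeds injectively). *)

Section Defs.
Variable K : fieldType.

Definition vdm (m : nat) (x : 'I_m -> K) : K :=
  \prod_(i < m) \prod_(j < m | (i < j)%N) (x i - x j).

Definition alternant (m : nat) (lam : 'I_m -> int) (x : 'I_m -> K) : K :=
  \sum_(s : 'S_m) (-1) ^+ s *
     \prod_(i < m) x (s i) ^ (lam i + ((m.-1 - i)%N)%:Z).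

Definition Elam (m : nat) (lam : 'I_m -> int) (x : 'I_m -> K) : K :=
  alternant lam x / vdm x.

Definition Hk (m : nat) (x : 'I_m -> K) (k : int) : K :=
  Elam (fun i : 'I_m => if val i == 0%N then k else 0) x.

(* Formal power series division: coefficients c_0, c_1, ... of P/Q at 0
   (Q`_0 <> 0), given by  c_n = (P_n - sum_{i=1}^n Q_i c_{n-i}) / Q_0. *)
Fixpoint series_seq (P Q : {poly K}) (n : nat) : seq K :=
  match n with
  | 0 => [:: P`_0 / Q`_0]
  | n'.+1 => let c := series_seq P Q n' in
      rcons c ((P`_n - \sum_(1 <= i < n.+1) Q`_i * c`_(n - i)) / Q`_0)
  end.

Definition series_coef (P Q : {poly K}) (n : nat) : K := (series_seq P Q n)`_n.

(* h_k : coefficient of t^k in the expansion of 1/prod_i (1 - x_i t) at t = 0 *)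
Definition hk (m : nat) (x : 'I_m -> K) (k : int) : K :=
  if (0 <= k) then series_coef 1 (\prod_(i < m) (1 - x i *: 'X)) `|k|%N
  else 0.

(* h^(oo)_k : coefficient of t^k in the expansion of 1/prod_i (1 - x_i t)
   at t = oo.  With s = 1/t, 1/prod_i (1 - x_i t) = s^m / prod_i (s - x_i),
   expanded at s = 0; the coefficient of t^k is that of s^(-k). *)
Definition hinf (m : nat) (x : 'I_m -> K) (k : int) : K :=
  if (k <= 0) then
    series_coef 'X^m (\prod_(i < m) ('X - (x i)%:P)) `|k|%N
  else 0.

End Defs.

Definition Kvar (m : nat) := {fraction {mpoly int[m]}}.
Definition xvar (m : nat) (i : 'I_m) : Kvar m := @FracField.tofrac _ 'X_i.

From HB Require Import structures.
From mathcomp Require Import all_boot all_order all_algebra all_fingroup.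
From mathcomp Require Import mpoly.
From mathcomp Require Import zify ring.
Set Implicit Arguments. Unset Strict Implicit. Unset Printing Implicit Defensive.
Import Order.TTheory GRing.Theory Num.Theory.
Local Open Scope ring_scope.

(* For distinct nonzero x_1, ..., x_m, expand the alternant of H_k along its
   first row.  The cofactors C_j satisfy sum_j x_j^p C_j = 0 for p < m - 1,
   since these sums are alternants with a repeated row, which determines them
   up to one scalar and yields the partial-fraction formula
     H_k = sum_j x_j^(k+m-1) / prod_(l != j) (x_j - x_l)
   (the Vandermonde identity falls out by induction on m).  The recursion (2)
   is then a termwise computation, and both expansions h_k and h^(oo)_k are
   matched with this formula through their convolution recurrences, which
   reduce to prod_i (1 - x_i t) vanishing at t = 1/x_j.  The generic variables
   of Frac(Z[x_1, ..., x_m]) are distinct and nonzero. *)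

Section Generic.
Variable K : fieldType.

Lemma series_coefE (P Q : {poly K}) (a : nat -> K) : Q`_0 != 0 ->
    (forall n, \sum_(i < n.+1) Q`_i * a (n - i)%N = P`_n) ->
  forall n, series_coef P Q n = a n.
Proof.
move=> Q0_neq0 conv_a.
have seqE n : series_seq P Q n = mkseq a n.+1.
  elim: n => [|n IHn] /=.
    by have := conv_a 0%N; rewrite big_ord1 subnn => <-; rewrite mulrC mulKf.
  rewrite IHn [mkseq a n.+2]mkseqS; congr (rcons _ _).
  have := conv_a n.+1; rewrite big_ord_recl subn0 => <-.
  rewrite big_add1 /= big_mkord.
  under [X in _ - X]eq_bigr => i _.
    rewrite nth_mkseq; last by rewrite ltn_subLR // addSn ltnS leq_addl.
    over.
  by rewrite addrK mulrC mulKf.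
by move=> n; rewrite /series_coef seqE nth_mkseq.
Qed.

Lemma sum_ord_widen (F : nat -> K) n N : (n <= N)%N ->
    (forall i, (n <= i < N)%N -> F i = 0) ->
  \sum_(i < n) F i = \sum_(i < N) F i.
Proof.
move=> le_nN F0; rewrite (big_ord_widen N F le_nN).
rewrite [RHS](bigID (fun i : 'I_N => (i < n)%N)) /=.
rewrite [X in _ = _ + X]big1 ?addr0 // => i; rewrite -leqNgt => le_ni.
by rewrite F0 // le_ni ltn_ord.
Qed.

Definition row_lam m (k : int) : 'I_m -> int :=
  fun i => if val i == 0%N then k else 0.

Definition alt_mx m (lam : 'I_m -> int) (x : 'I_m -> K) : 'M[K]_m :=
  \matrix_(i, j) x j ^ (lam i + ((m.-1 - i)%N)%:Z).

Lemma alternant_det m (lam : 'I_m -> int) (x : 'I_m -> K) :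
  alternant lam x = \det (alt_mx lam x).
Proof.
apply: eq_bigr => s _; congr (_ * _).
by apply: eq_bigr => i _; rewrite mxE.
Qed.

Lemma eq_alternant m (lam lam' : 'I_m -> int) (x : 'I_m -> K) :
  lam =1 lam' -> alternant lam x = alternant lam' x.
Proof.
move=> eq_lam; apply: eq_bigr => s _; congr (_ * _).
by apply: eq_bigr => i _; rewrite eq_lam.
Qed.

Definition alt_cofactor m (x : 'I_m.+1 -> K) (j : 'I_m.+1) : K :=
  cofactor (alt_mx (fun _ => 0) x) ord0 j.

Lemma alternant_row_lam m (x : 'I_m.+1 -> K) (k : int) :
  alternant (@row_lam m.+1 k) x = \sum_j x j ^ (k + m%:Z) * alt_cofactor x j.
Proof.
rewrite alternant_det (expand_det_row _ ord0); apply: eq_bigr => j _.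
congr (_ * _); first by rewrite mxE /= subn0.
by congr (_ * \det _); apply/matrixP => i l; rewrite !mxE.
Qed.

(* For [-m < k < 0] the first row of the alternant matrix equals row [|k|]. *)
Lemma alternant_row_lam_eq0 m (x : 'I_m.+1 -> K) (k : int) :
  - (m.+1)%:Z < k -> k < 0 -> alternant (@row_lam m.+1 k) x = 0.
Proof.
move=> k_gt k_lt0; have abs_k_lt : (`|k| < m.+1)%N by lia.
rewrite alternant_det (@determinant_alternate _ _ _ ord0 (Ordinal abs_k_lt)) //.
  by rewrite -val_eqE /=; lia.
move=> j; rewrite !mxE /row_lam /=.
have -> : (absz k == 0%N) = false by lia.
by congr (_ ^ _); rewrite subn0; lia.
Qed.

Definition node_weight m (x : 'I_m -> K) (j : 'I_m) : K :=
  (\prod_(l | l != j) (x j - x l))^-1.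

Definition Hlag m (x : 'I_m -> K) (k : int) : K :=
  \sum_j x j ^ (k + (m.-1)%:Z) * node_weight x j.

Lemma node_prod_neq0 m (x : 'I_m -> K) j : injective x ->
  \prod_(l | l != j) (x j - x l) != 0.
Proof.
move=> x_inj; apply/prodf_neq0 => l ne_lj.
by rewrite subr_eq0; apply: contraNneq ne_lj => /x_inj ->.
Qed.

(* Pair [u] with the coefficients of [prod_(l != j0) ('X - x l)], which has
   degree [m] and vanishes at every node except [x j0]. *)
Lemma moments_eq0_node_weight m (x : 'I_m.+1 -> K) (u : 'I_m.+1 -> K) :
    injective x -> (forall p, (p < m)%N -> \sum_j x j ^+ p * u j = 0) ->
  forall j0, u j0 = (\sum_j x j ^+ m * u j) * node_weight x j0.
Proof.
move=> x_inj u_moments j0.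
set g := \prod_(l | l != j0) ('X - (x l)%:P).
have size_g : size g = m.+1.
  rewrite /g -big_filter size_prod_XsubC.
  by rewrite -[filter _ _]/(enum (predC1 j0)) -cardE cardC1 card_ord.
have g_lead : g`_m = 1.
  have := monicP (monic_prod_XsubC (index_enum 'I_m.+1) (fun l => l != j0) x).
  by rewrite -/g /lead_coef size_g.
have sum_g_j0 : \sum_j g.[x j] * u j = g.[x j0] * u j0.
  rewrite (bigD1 j0) //= big1 ?addr0 // => j nj.
  by rewrite /g horner_prod (bigD1 j) //= hornerXsubC subrr !mul0r.
have sum_g_m : \sum_j g.[x j] * u j = \sum_j x j ^+ m * u j.
  under eq_bigr => j _ do rewrite (horner_coef_wide _ (eq_leq size_g)) big_distrl.
  rewrite exchange_big /= big_ord_recr /= big1 ?add0r.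
    by apply: eq_bigr => j _; rewrite g_lead mul1r.
  move=> i _; under eq_bigr => j _ do rewrite -mulrA.
  by rewrite -big_distrr /= u_moments ?mulr0.
have g_j0 : g.[x j0] = \prod_(l | l != j0) (x j0 - x l).
  by rewrite /g horner_prod; apply: eq_bigr => l _; rewrite hornerXsubC.
rewrite -sum_g_m sum_g_j0 g_j0 /node_weight mulrC mulrA mulVf ?mul1r //.
exact: node_prod_neq0.
Qed.

Lemma alt_cofactorE m (x : 'I_m.+1 -> K) : injective x ->
  forall j, alt_cofactor x j = alternant (fun _ => 0) x * node_weight x j.
Proof.
move=> x_inj j; rewrite (moments_eq0_node_weight (u := alt_cofactor x) x_inj _ j).
  congr (_ * _); rewrite -(@eq_alternant _ (@row_lam m.+1 0)).
    by rewrite alternant_row_lam; apply: eq_bigr => i _; rewrite add0r.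
  by move=> i; rewrite /row_lam if_same.
move=> p lt_pm; have alt_eq0 : alternant (@row_lam m.+1 (p%:Z - m%:Z)) x = 0.
  by apply: alternant_row_lam_eq0; lia.
rewrite alternant_row_lam in alt_eq0; rewrite -[RHS]alt_eq0.
by apply: eq_bigr => i _; rewrite subrK.
Qed.

Lemma alternant0_vdm m (x : 'I_m -> K) : injective x ->
  alternant (fun _ => 0) x = vdm x.
Proof.
elim: m x => [|m IHm] x x_inj.
  by rewrite alternant_det det_mx00 /vdm big_ord0.
pose x' i := x (lift ord0 i).
have x'_inj : injective x' by move=> i j /x_inj /lift_inj.
have cofactor0 : alt_cofactor x ord0 = vdm x'.
  rewrite -IHm // /alt_cofactor /cofactor /= expr0 mul1r alternant_det.
  congr (\det _); apply/matrixP => i j; rewrite !mxE /= /bump leq0n add1n.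
  by congr (_ ^ (_ + Posz _)); lia.
have vdm_rec : vdm x = (\prod_(l | l != ord0) (x ord0 - x l)) * vdm x'.
  rewrite /vdm big_ord_recl; congr (_ * _).
    by apply: eq_bigl => j; rewrite lt0n.
  apply: eq_bigr => i _; rewrite big_mkcond big_ord_recl /= mul1r [RHS]big_mkcond.
  by apply: eq_bigr.
rewrite vdm_rec -cofactor0 alt_cofactorE // /node_weight mulrC mulfVK //.
exact: node_prod_neq0.
Qed.

Lemma vdm_neq0 m (x : 'I_m -> K) : injective x -> vdm x != 0.
Proof.
move=> x_inj; apply/prodf_neq0 => i _; apply/prodf_neq0 => j lt_ij.
by rewrite subr_eq0; apply: contraTneq lt_ij => /x_inj ->; rewrite ltnn.
Qed.

Lemma Hk_eq0 m (x : 'I_m.+1 -> K) (k : int) :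
  - (m.+1)%:Z < k -> k < 0 -> Hk x k = 0.
Proof. by move=> k_gt k_lt0; rewrite /Hk /Elam alternant_row_lam_eq0 ?mul0r. Qed.

Lemma Hk_lagrange m (x : 'I_m.+1 -> K) (k : int) : injective x -> Hk x k = Hlag x k.
Proof.
move=> x_inj; rewrite /Hk /Elam -[alternant _ x]/(alternant (@row_lam m.+1 k) x).
rewrite alternant_row_lam /Hlag mulr_suml; apply: eq_bigr => j _.
rewrite alt_cofactorE // alternant0_vdm // mulrCA mulrC mulKf //.
exact: vdm_neq0.
Qed.

Lemma node_weight_lift m (x : 'I_m.+1 -> K) i :
  node_weight x (lift ord0 i) =
    (x (lift ord0 i) - x ord0)^-1 * node_weight (fun l => x (lift ord0 l)) i.
Proof.
rewrite /node_weight big_mkcond big_ord_recl /= -invfM; congr ((_ * _)^-1).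
by rewrite [RHS]big_mkcond; apply: eq_bigr => l _; rewrite (inj_eq lift_inj).
Qed.

Lemma size_prod_1subZX m (c : 'I_m -> K) :
  (size (\prod_(i < m) (1 - c i *: 'X) : {poly K})%R <= m.+1)%N.
Proof.
apply: leq_trans (size_poly_prod_leq _ _) _.
have size_factor i : (size (1 - c i *: 'X : {poly K})%R <= 2)%N.
  rewrite (leq_trans (size_polyD _ _)) // geq_max size_poly1 size_polyN.
  by rewrite (leq_trans (size_scale_leq _ _)) ?size_polyX.
have : (\sum_(i < m) size (1 - c i *: 'X : {poly K})%R <= \sum_(i < m) 2)%N.
  by apply: leq_sum => i _; exact: size_factor.
rewrite sum_nat_const card_ord.
set S := bigop _ _ _; lia.
Qed.

Section Nodes.
Variables (m : nat) (x : 'I_m.+1 -> K).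
Hypotheses (x_inj : injective x) (x_neq0 : forall i, x i != 0).

Lemma Hlag_eq0 (k : int) : - (m.+1)%:Z < k -> k < 0 -> Hlag x k = 0.
Proof. by move=> k_gt k_lt0; rewrite -Hk_lagrange // Hk_eq0. Qed.

Lemma Hlag0 : Hlag x 0 = 1.
Proof.
rewrite -Hk_lagrange // /Hk /Elam (@eq_alternant _ _ (fun _ => 0)).
  by rewrite alternant0_vdm // divff // vdm_neq0.
by move=> i; rewrite if_same.
Qed.

Lemma Hlag_rec (k : int) :
  Hlag x k - x ord0 * Hlag x (k - 1) = Hlag (fun i => x (lift ord0 i)) k.
Proof.
have split_term j : x j ^ (k + m%:Z) * node_weight x j
    - x ord0 * (x j ^ (k - 1 + m%:Z) * node_weight x j)
  = (x j - x ord0) * x j ^ (k - 1 + m%:Z) * node_weight x j.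
  have -> : k + m%:Z = (k - 1 + m%:Z) + 1 by lia.
  by rewrite expfzDr // expr1z; ring.
rewrite /Hlag mulr_sumr -sumrB (eq_bigr _ (fun j _ => split_term j)) /=.
rewrite big_ord_recl subrr !mul0r add0r; apply: eq_bigr => i _.
have m_gt0 : (0 < m)%N := leq_ltn_trans (leq0n i) (ltn_ord i).
have -> : k - 1 + m%:Z = k + (m.-1)%:Z by lia.
have x_sub_neq0 : x (lift ord0 i) - x ord0 != 0.
  by rewrite subr_eq0; apply: contraNneq (neq_lift ord0 i) => /x_inj ->.
by rewrite node_weight_lift; field.
Qed.

Lemma Hlag_conv (Q : {poly K}) N (e c : int) :
    (size Q <= N)%N -> (forall j, Q.[x j ^ c] = 0) ->
  \sum_(i < N) Q`_i * Hlag x (e + c * i%:Z) = 0.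
Proof.
move=> size_Q Q_root; rewrite /Hlag.
under eq_bigr do rewrite big_distrr; rewrite exchange_big /=; apply: big1 => j _.
transitivity (x j ^ (e + m%:Z) * node_weight x j * Q.[x j ^ c]); last first.
  by rewrite Q_root mulr0.
rewrite (horner_coef_wide _ size_Q) big_distrr; apply: eq_bigr => i _ /=.
have -> : (x j ^ c) ^+ i = (x j ^ c) ^ i%:Z by [].
rewrite exprz_exp -addrA [c * _ + _]addrC addrA [x j ^ (_ + c * _)]expfzDr //; ring.
Qed.

Lemma series_coef_hk n :
  series_coef 1 (\prod_(i < m.+1) (1 - x i *: 'X)) n = Hlag x n%:Z.
Proof.
set Q := \prod_(i < m.+1) _.
have Q0 : Q`_0 = 1.
  by rewrite -horner_coef0 horner_prod big1 // => i _; rewrite !hornerE subr0.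
have Q_root j : Q.[x j ^ -1] = 0.
  by rewrite horner_prod (bigD1 j) //= !hornerE exprN1 mulfV // subrr mul0r.
move: n; apply: (series_coefE (a := fun n : nat => Hlag x n%:Z)) => [|[|n]].
  by rewrite Q0 oner_neq0.
  by rewrite big_ord1 Q0 mul1r Hlag0 coef1.
rewrite coef1.
pose F i := Q`_i * Hlag x (n.+1%:Z + (-1) * i%:Z).
transitivity (\sum_(i < n.+2) F i).
  apply: eq_bigr => i _; rewrite /F; congr (_ * Hlag x _).
  by have := ltn_ord i; lia.
have widen : \sum_(i < n.+2) F i = \sum_(i < (n.+1 + m).+1) F i.
  apply: sum_ord_widen => [|i /andP [le_ni lt_i]]; first lia.
  by rewrite /F Hlag_eq0 ?mulr0 //; lia.
rewrite widen; apply: Hlag_conv => //.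
by apply: leq_trans (size_prod_1subZX x) _; lia.
Qed.

Lemma series_coef_hinf n :
  series_coef 'X^(m.+1) (\prod_(i < m.+1) ('X - (x i)%:P)) n
    = (n == 0%N)%:R - Hlag x (- n%:Z).
Proof.
set Q := \prod_(i < m.+1) _.
have size_Q : size Q = m.+2.
  by rewrite size_prod_XsubC /index_enum -enumT size_enum_ord.
have Q_lead : Q`_m.+1 = 1.
  have := monicP (monic_prod_XsubC (index_enum 'I_m.+1) predT x).
  by rewrite -/Q /lead_coef size_Q.
have Q0 : Q`_0 != 0.
  rewrite -horner_coef0 horner_prod; apply/prodf_neq0 => i _.
  by rewrite hornerXsubC sub0r oppr_eq0.
have Q_root j : Q.[x j ^ 1] = 0.
  by rewrite expr1z horner_prod (bigD1 j) //= hornerXsubC subrr mul0r.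
pose a n := (n == 0%N)%:R - Hlag x (- n%:Z).
move: n; apply: (series_coefE (a := a)) => // n; rewrite /a.
rewrite coefXn.
under eq_bigr => i _ do rewrite mulrBr.
rewrite sumrB big_ord_recr /= subnn mulr1 big1 ?add0r; last first.
  by move=> i _; rewrite subn_eq0 leqNgt ltn_ord mulr0.
transitivity (Q`_n - \sum_(i < n.+1) Q`_i * Hlag x (- n%:Z + 1 * i%:Z)).
  congr (_ - _); apply: eq_bigr => i _; congr (_ * Hlag x _).
  by have := ltn_ord i; lia.
have [le_nm | lt_mn] := leqP n m.
  rewrite big_ord_recr /= mul1r addNr Hlag0 mulr1 big1 ?add0r ?subrr ?ltn_eqF //.
  by move=> i _; rewrite Hlag_eq0 ?mulr0 //; have := ltn_ord i; lia.
rewrite Hlag_conv ?size_Q // subr0.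
have [->|ne_n] := eqVneq n m.+1; first by rewrite Q_lead.
by rewrite nth_default // size_Q; lia.
Qed.

Lemma hk_Hlag (k : int) : hk x k = if 0 <= k then Hlag x k else 0.
Proof. by rewrite /hk; case: ifP => // k_ge0; rewrite series_coef_hk gez0_abs. Qed.

Lemma hinf_Hlag (k : int) : hinf x k = if k < 0 then - Hlag x k else 0.
Proof.
rewrite /hinf; have [k_lt0 | k_ge0] := ltrP k 0.
  rewrite ifT ?ltW // series_coef_hinf ltz0_abs // opprK.
  have -> : (`|k| == 0)%N = false by lia.
  by rewrite sub0r.
case: ifP => // k_le0; have -> : k = 0 by lia.
by rewrite series_coef_hinf Hlag0 subrr.
Qed.

Lemma Hk_hk_hinf (k : int) : Hk x k = hk x k - hinf x k.
Proof.
rewrite Hk_lagrange // hk_Hlag hinf_Hlag.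
by case: ltrP; rewrite ?sub0r ?opprK ?subr0.
Qed.

End Nodes.

Lemma Hk_rec m (x : 'I_m.+2 -> K) (k : int) :
    injective x -> (forall i, x i != 0) ->
  Hk x k - x ord0 * Hk x (k - 1) = Hk (fun i => x (lift ord0 i)) k.
Proof.
move=> x_inj x_neq0; have x'_inj : injective (fun i => x (lift ord0 i)).
  by move=> i j /x_inj /lift_inj.
by rewrite !Hk_lagrange // Hlag_rec.
Qed.

Lemma Hk_rec1 (x : 'I_1 -> K) (k : int) : x ord0 != 0 ->
  Hk x k - x ord0 * Hk x (k - 1) = 0.
Proof.
move=> x0_neq0; have x_inj : injective x.
  by move=> i j _; rewrite (ord1 i) (ord1 j).
have x_neq0 i : x i != 0 by rewrite ord1.
by rewrite !Hk_lagrange // Hlag_rec // /Hlag big_ord0.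
Qed.

End Generic.

Lemma xvar_inj m : injective (@xvar m).
Proof.
move=> i j /eqP; rewrite /xvar tofrac_eq => /eqP /(congr1 (mcoeff U_(i))).
rewrite !mcoeffXU eqxx; case: eqP => // _ /eqP; rewrite oner_eq0.
Qed.

Lemma xvar_neq0 m i : @xvar m i != 0.
Proof.
rewrite /xvar tofrac_eq0; apply: contraTneq isT => /(congr1 (mcoeff U_(i))).
by rewrite mcoeffXU eqxx mcoeff0 => /eqP; rewrite oner_eq0.
Qed.

Theorem mainTheorem2 (n : nat) :
  (* m = n.+1 >= 1 variables x_1 = xvar ord0, ..., x_m *)
  let x := @xvar n.+1 in
  (* (1) *)
  (forall k : int, Hk x k = hk x k - hinf x k) /\
  (forall k : int, 0 <= k -> Hk x k = hk x k) /\
  (forall k : int, - (n.+1)%:Z < k -> k < 0 -> Hk x k = 0) /\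
  (forall k : int, k <= - (n.+1)%:Z -> Hk x k = - hinf x k) /\
  (* (2) for m >= 2: H_k(x_1..x_m) - x_1 H_{k-1}(x_1..x_m) = H_k(x_2..x_m) *)
  ((0 < n)%N -> forall k : int,
      Hk x k - x ord0 * Hk x (k - 1) = Hk (fun i : 'I_n => x (lift ord0 i)) k) /\
  (* (3) m = 1 *)
  (n = 0%N -> forall k : int, Hk x k - x ord0 * Hk x (k - 1) = 0).
Proof.
move=> x; rewrite {}/x.
have x_inj := @xvar_inj n.+1; have x_neq0 := @xvar_neq0 n.+1.
split; [|split; [|split; [|split; [|split]]]].
- by move=> k; rewrite Hk_hk_hinf.
- by move=> k k_ge0; rewrite Hk_hk_hinf // hinf_Hlag // ltNge k_ge0 subr0.
- exact: Hk_eq0.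
- move=> k k_le; rewrite Hk_hk_hinf // hk_Hlag // ifN ?sub0r //; lia.
- case: n {x_inj x_neq0} => [|n] // _ k.
  exact: Hk_rec (@xvar_inj _) (@xvar_neq0 _).
- by move=> n0 k; subst n; exact: Hk_rec1 (xvar_neq0 _).
Qed.
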